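(* Let $d\ge 2$. For every $R \subseteq \{0,1,\dots,d-1\}$, $$\min_{m \in \mathcal{M}_d(R)} \| m - \textsc{max} \|_\infty = \min_{m \in \mathcal{M}^s_d(R)} \| m - \textsc{max} \|_\infty.$$
   Context: For $x\in\mathbb{R}^d$ and nonempty $A\subseteq\{1,\dots,d\}$, $s(x;A)=\max\{x_j:j\in A\}$; $C(k,r,d)$ is the $k$-th $r$-element subset of $\{1,\dots,d\}$ in lexicographic order. $\mathcal{M}_d(R)$ is the set of functions $x\mapsto \beta_0+\sum_{r\in R\setminus\{0\}}\sum_{j=1}^{\binom dr}\beta_r^j s(x;C(j,r,d))$ with real coefficients, the intercept $\beta_0$ present iff $0\in R$. $\mathcal{M}_d^s(R)=\{m\in\mathcal{M}_d(R): m(x_1,\dots,x_d)=m(x_{\sigma_1},\dots,x_{\sigma_d})\text{ for all permutations }\sigma\text{ of }\{1,\dots,d\}\}$. $\textsc{max}(x)=\max_i x_i$ and $\|\cdot\|_\infty$ is the sup norm over $[0,1]^d$. *)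

From HB Require Import structures.
From mathcomp Require Import all_boot all_order all_algebra all_fingroup.
From mathcomp Require Import all_classical all_reals.
Set Implicit Arguments. Unset Strict Implicit. Unset Printing Implicit Defensive.
Import Order.TTheory GRing.Theory Num.Theory.
Local Open Scope ring_scope.
Local Open Scope classical_set_scope.

Section Defs.
Variables (R : realType) (d : nat).

(* s(x;A) = max { x_j : j in A } for nonempty A (the seed of the fold is
   x_j for some j in A, so the fold is the true maximum; for A empty it is 0,
   which is never used). *)
Definition smax (x : 'I_d -> R) (A : {set 'I_d}) : R :=
  \big[Num.max/oapp x 0 [pick j in A]]_(j in A) x j.

Definition maxf (x : 'I_d -> R) : R := smax x [set: 'I_d].

(* Admissible (nonzero) orders r in R \ {0}; the subsets C(j,r,d),
   j = 1..binom d r, are exactly the r-element subsets of {1..d}. *)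
Definition admissible (Rs : {set 'I_d}) (A : {set 'I_d}) : bool :=
  (0 < #|A|)%N && [exists r in Rs, val r == #|A|].

Definition inM (Rs : {set 'I_d}) (m : ('I_d -> R) -> R) : Prop :=
  exists (b0 : R) (beta : {set 'I_d} -> R),
    forall x, m x = (if [exists r in Rs, val r == 0%N] then b0 else 0)
                    + \sum_(A : {set 'I_d} | admissible Rs A) beta A * smax x A.

Definition inMs (Rs : {set 'I_d}) (m : ('I_d -> R) -> R) : Prop :=
  inM Rs m /\ forall (s : 'S_d) (x : 'I_d -> R), m x = m (fun i => x (s i)).

Definition cube : set ('I_d -> R) := [set x | forall i, 0 <= x i <= 1].

Definition supnorm (f : ('I_d -> R) -> R) : R := sup [set `|f x| | x in cube].

End Defs.

(** For [m] in M_d(R), the sup-distance from [m] to MAX on [0,1]^d is attained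
at a vertex of the cube.  Indeed [m - MAX] has the form
[c + \sum_A g A * s(x; A)], and a point [x] with fractional coordinates splits
as [x = (1 - t) v + t z], where [t] is its largest fractional coordinate, [v] a
vertex and [z] a point with fewer fractional coordinates; both pieces are
nondecreasing images of the coordinates of [x], so every [s(.; A)] is affine
along this split.
   Averaging [m] over the permutations of the coordinates keeps it in M_d(R),
makes it symmetric, and does not increase the vertex maximum, since the
permutations permute the vertices and fix MAX.  It remains to see that the
minimum over M_d(R) is attained.  The vertex maximum is a continuous function
of the coefficients, and inclusion-exclusion over the vertices bounds the
coefficients of every [m] within distance 1 of MAX by [4 (2^d + 1)^d];
as the zero function is at distance 1, it suffices to minimise over a compact
box of coefficients. *)

From mathcomp Require Import all_boot all_order all_algebra all_fingroup.
From mathcomp Require Import all_classical all_reals all_analysis.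
From mathcomp Require Import ring lra.
Import Order.TTheory GRing.Theory Num.Theory numFieldNormedType.Exports.
Import mathcomp.boot.finset.

Set Implicit Arguments.
Unset Strict Implicit.
Unset Printing Implicit Defensive.

Local Open Scope ring_scope.

Section SubsetMax.
Variables (R : realType) (d : nat).
Implicit Types (x : 'I_d -> R) (A S : {set 'I_d}).

Lemma smax_ub x A j : j \in A -> x j <= smax x A.
Proof. exact: le_bigmax_cond. Qed.

Lemma smax_set0 x : smax x set0 = 0.
Proof. by rewrite /smax big_set0; case: pickP => // j; rewrite inE. Qed.

Lemma smax_eq x A M :
  (forall j, j \in A -> x j <= M) -> (exists2 j, j \in A & x j = M) -> smax x A = M.
Proof.
move=> xA_le [j jA xjM]; apply/le_anti; rewrite -{2}xjM smax_ub // andbT.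
apply: bigmax_le => [|i /xA_le //].
by case: (pickP [in A]) => [i /xA_le //|/(_ j)]; rewrite /= jA.
Qed.

Lemma smax_attained x A : A != set0 -> exists2 j, j \in A & smax x A = x j.
Proof.
case/set0Pn=> j0 j0A; have [j jA x_le] := arg_maxP x j0A.
by exists j => //; apply: smax_eq => [i /x_le //|]; exists j.
Qed.

Lemma smax_homo (phi : R -> R) x A :
  {homo phi : u v / u <= v} -> phi 0 = 0 ->
  smax (phi \o x) A = phi (smax x A).
Proof.
move=> phi_homo phi0; have [->|A0] := eqVneq A set0; first by rewrite !smax_set0.
have /(smax_attained x) [j jA smaxE] := A0; rewrite smaxE.
apply: smax_eq => [i iA|]; last by exists j.
by apply/phi_homo; rewrite -smaxE smax_ub.
Qed.

Lemma smax_comonotone (phi psi : R -> R) a b x A :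
  {homo phi : u v / u <= v} -> {homo psi : u v / u <= v} ->
  phi 0 = 0 -> psi 0 = 0 -> 0 <= a -> 0 <= b ->
  (forall j, a * phi (x j) + b * psi (x j) = x j) ->
  smax x A = a * smax (phi \o x) A + b * smax (psi \o x) A.
Proof.
move=> phi_homo psi_homo phi0 psi0 a_ge0 b_ge0 xE.
pose chi u := a * phi u + b * psi u.
have chi_homo : {homo chi : u v / u <= v}.
  by move=> u v uv; rewrite lerD // ler_wpM2l // (phi_homo, psi_homo).
have chi0 : chi 0 = 0 by rewrite /chi phi0 psi0 !mulr0 addr0.
transitivity (smax (chi \o x) A); first by congr smax; apply/funext => j; rewrite /= /chi xE.
by rewrite !smax_homo.
Qed.

Lemma smax_perm x A (s : 'S_d) : smax (fun i => x (s i)) A = smax x (s @: A).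
Proof.
have [->|/(smax_attained (fun i => x (s i))) [j jA smaxE]] := eqVneq A set0.
  by rewrite imset0 !smax_set0.
symmetry; apply: smax_eq => [_ /imsetP [i iA ->]|]; last by exists (s j); rewrite ?imset_f.
by rewrite smaxE -smaxE (smax_ub (fun i => x (s i))).
Qed.

Definition vertex S : 'I_d -> R := fun j => (j \in S)%:R.

Lemma smax_vertex S A : smax (vertex S) A = (A :&: S != set0)%:R.
Proof.
have [AS0|AS_neq0] := eqVneq (A :&: S) set0; last first.
  have /set0Pn [j /setIP [jA jS]] := AS_neq0.
  apply: smax_eq => [i _|]; last by exists j => //; rewrite /vertex jS.
  by rewrite /vertex; case: (i \in S); rewrite ?ler01.
have [->|/set0Pn [j jA]] := eqVneq A set0; first by rewrite smax_set0.
have vertex0 i : i \in A -> vertex S i = 0.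
  move=> iA; rewrite /vertex; case: (boolP (i \in S)) => // iS.
  by move/setP/(_ i): AS0; rewrite !inE iA iS.
by apply: smax_eq => [i /vertex0 ->|]; last by exists j => //; rewrite vertex0.
Qed.

End SubsetMax.

Section CubeVertices.
Variables (R : realType) (d : nat).
Implicit Types (x y z : 'I_d -> R) (f : ('I_d -> R) -> R).

Definition frac x : {set 'I_d} := [set j | 0 < x j < 1].

Lemma vertex_cube (S : {set 'I_d}) : cube (vertex R S).
Proof. by move=> j; rewrite /vertex; case: (j \in S); rewrite /= ?lexx ?ler01. Qed.

Lemma cube_frac0 x : cube x -> frac x = set0 -> x = vertex R [set j | x j == 1].
Proof.
move=> x_cube frac0; apply/funext => j; rewrite /vertex inE.
have /andP [xj_ge0 xj_le1] := x_cube j.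
have : j \notin frac x by rewrite frac0 inE.
rewrite inE negb_and -!leNgt => /orP [xj_le0|xj_ge1].
  have -> : x j = 0 by apply/le_anti; rewrite xj_le0 xj_ge0.
  by rewrite eq_sym oner_eq0.
have -> : x j = 1 by apply/le_anti; rewrite xj_ge1 xj_le1.
by rewrite eqxx.
Qed.

Section CubeSplit.
Variables (x : 'I_d -> R).
Hypotheses (x_cube : cube x) (frac_x : frac x != set0).

Let t := smax x (frac x).

Let t_bounds : 0 < t < 1.
Proof. by have [j] := smax_attained x frac_x; rewrite inE /t => + ->. Qed.

Let t_gt0 : 0 < t. Proof. by case/andP: t_bounds. Qed.
Let t_lt1 : t < 1. Proof. by case/andP: t_bounds. Qed.

Let x_le_t_or_1 j : x j <= t \/ x j = 1.
Proof.
have /andP [xj_ge0 xj_le1] := x_cube j.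
have [xj_frac|] := boolP (j \in frac x); first by left; exact: smax_ub.
rewrite inE negb_and -!leNgt => /orP [xj_le0|xj_ge1].
  by left; rewrite (le_trans xj_le0) // ltW.
by right; apply/le_anti; rewrite xj_le1.
Qed.

Let phi (u : R) : R := if t < u then 1 else 0.
Let psi (u : R) : R := Num.min (u / t) 1.

Let phi_homo : {homo phi : u v / u <= v}.
Proof.
move=> u v uv; rewrite /phi; case: ifP => [tu|_]; first by rewrite (lt_le_trans tu uv).
by case: ifP; rewrite ?ler01.
Qed.

Let psi_homo : {homo psi : u v / u <= v}.
Proof.
move=> u v uv; rewrite /psi le_min !ge_min lexx orbT andbT.
by rewrite ler_pM2r ?invr_gt0 // uv.
Qed.

Let phi0 : phi 0 = 0. Proof. by rewrite /phi ltNge ltW. Qed.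
Let psi0 : psi 0 = 0. Proof. by rewrite /psi mul0r; apply/min_idPl. Qed.

Let psi_le_t u : u <= t -> psi u = u / t.
Proof. by move=> u_le; apply/min_idPl; rewrite ler_pdivrMr // mul1r. Qed.

Let psi1 : psi 1 = 1.
Proof. by apply/min_idPr; rewrite mul1r invf_ge1 // ltW. Qed.

Let phi_psi_split j : (1 - t) * phi (x j) + t * psi (x j) = x j.
Proof.
case: (x_le_t_or_1 j) => [xj_le|->]; last by rewrite /phi t_lt1 psi1 !mulr1 subrK.
by rewrite /phi ltNge xj_le /= mulr0 add0r psi_le_t // mulrC divfK ?gt_eqF.
Qed.

Let psi_cube : cube (psi \o x).
Proof.
move=> j /=; have /andP [xj_ge0 _] := x_cube j.
by rewrite /psi le_min ge_min lexx orbT ler01 andbT divr_ge0 // ltW.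
Qed.

Lemma cube_split : exists t S z,
  [/\ 0 < t < 1, cube z, (#|frac z| < #|frac x|)%N
    & forall A, smax x A = (1 - t) * smax (vertex R S) A + t * smax z A].
Proof.
have [jt jt_frac xjt] := smax_attained x frac_x; rewrite -/t in xjt.
have psi_frac : frac (psi \o x) \subset frac x :\ jt.
  apply/fintype.subsetP => j; rewrite !inE /=.
  case: (x_le_t_or_1 j) => [xj_le|->]; last by rewrite psi1 ltxx andbF.
  rewrite psi_le_t // pmulr_lgt0 ?invr_gt0 // ltr_pdivrMr // mul1r.
  case/andP=> xj_gt0 xj_lt_t; rewrite xj_gt0 (lt_trans xj_lt_t) // !andbT.
  by apply: contraTneq xj_lt_t => ->; rewrite -xjt ltxx.
exists t, [set j | t < x j], (psi \o x); split => //.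
  apply: leq_ltn_trans (subset_leq_card psi_frac) _.
  by rewrite [X in (_ < X)%N](cardsD1 jt) jt_frac.
have -> : vertex R [set j | t < x j] = phi \o x.
  by apply/funext => j; rewrite /vertex /phi inE /=; case: ifP.
move=> A; apply: (smax_comonotone _ phi_homo psi_homo phi0 psi0) => //.
  by rewrite subr_ge0 ltW.
exact: ltW.
Qed.

End CubeSplit.

Definition smax_affine f :=
  exists c (g : {set 'I_d} -> R), forall x, f x = c + \sum_A g A * smax x A.

Lemma smax_affine_convex f x y z t : smax_affine f ->
  (forall A, smax x A = (1 - t) * smax y A + t * smax z A) ->
  f x = (1 - t) * f y + t * f z.
Proof.
case=> c [g fE] xE; rewrite !fE.
have -> : \sum_A g A * smax x A =
    (1 - t) * \sum_A g A * smax y A + t * \sum_A g A * smax z A.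
  by rewrite !mulr_sumr -big_split; apply: eq_bigr => A _; rewrite /= xE; ring.
ring.
Qed.

Lemma smax_affine_cube_bound f E : smax_affine f ->
  (forall S, `|f (vertex R S)| <= E) -> forall x, cube x -> `|f x| <= E.
Proof.
move=> f_affine f_vertex x; have [n] := ubnP #|frac x|.
elim: n x => // n IH x frac_lt x_cube.
have [frac0|frac_neq0] := eqVneq (frac x) set0.
  by rewrite (cube_frac0 x_cube frac0).
have [t [S [z [/andP [t_gt0 t_lt1] z_cube z_frac xE]]]] :=
  cube_split x_cube frac_neq0.
have fz_le : `|f z| <= E by apply: IH => //; apply: leq_trans z_frac _.
rewrite (smax_affine_convex f_affine xE).
apply: le_trans (ler_normD _ _) _.
rewrite !normrM (ger0_norm (ltW t_gt0)) ger0_norm ?subr_ge0 ?(ltW t_lt1) //.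
apply: le_trans (_ : _ <= (1 - t) * E + t * E) _; last by rewrite -mulrDl subrK mul1r.
by apply: lerD; apply: ler_wpM2l => //; rewrite ?subr_ge0 ltW.
Qed.

Definition vertex_norm f : R := \big[Num.max/0]_(S : {set 'I_d}) `|f (vertex R S)|.

Lemma supnorm_vertex_norm f : smax_affine f -> supnorm f = vertex_norm f.
Proof.
move=> f_affine; rewrite /supnorm; set E := [set _ | _ in _]%classic.
have vertex_E S : E `|f (vertex R S)| by exists (vertex R S); first exact: vertex_cube.
have E_ub : ubound E (vertex_norm f).
  move=> _ [x x_cube <-]; apply: smax_affine_cube_bound x_cube => // S.
  exact: le_bigmax.
apply/le_anti; rewrite ge_sup //; last exact: ex_intro _ _ (vertex_E set0).
have E_sup := ub_le_sup (ex_intro _ _ E_ub).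
apply: bigmax_le => [|S _]; last exact: E_sup.
exact: le_trans (normr_ge0 _) (E_sup _ (vertex_E set0)).
Qed.

End CubeVertices.

Section Symmetrization.
Variables (R : realType) (d : nat).
Implicit Types (x : 'I_d -> R) (f m : ('I_d -> R) -> R) (Rs : {set 'I_d}).

Lemma inM_smax_affine Rs m : inM Rs m -> smax_affine (fun x => m x - maxf x).
Proof.
case=> b0 [beta mE]; exists (if [exists r in Rs, val r == 0%N] then b0 else 0).
exists (fun A => (if admissible Rs A then beta A else 0) - (A == [set: 'I_d])%:R).
move=> x; rewrite mE -addrA; congr (_ + _).
have -> : maxf x = \sum_A (A == [set: 'I_d])%:R * smax x A.
  by rewrite (bigD1 [set: 'I_d]) //= eqxx mul1r big1 ?addr0 // => A /negbTE ->; rewrite mul0r.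
rewrite big_mkcond -sumrB; apply: eq_bigr => A _.
by case: ifP; rewrite mulrBl ?mul0r.
Qed.

Lemma maxf_perm (s : 'S_d) x : maxf (fun i => x (s i)) = maxf x.
Proof.
by rewrite /maxf smax_perm im_perm_on //; apply/fintype.subsetP => i; rewrite inE.
Qed.

Definition symmetrize f x : R :=
  #|'S_d|%:R^-1 * \sum_(s : 'S_d) f (fun i => x (s i)).

Let card_Sd_neq0 : #|'S_d|%:R != 0 :> R.
Proof. by rewrite card_Sn pnatr_eq0 -lt0n fact_gt0. Qed.

Lemma symmetrize_perm f (s : 'S_d) x :
  symmetrize f x = symmetrize f (fun i => x (s i)).
Proof.
rewrite /symmetrize (reindex_inj (mulIg s)); congr (_ * _); apply: eq_bigr => t _.
by congr f; apply/funext => i; rewrite permM.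
Qed.

Lemma symmetrize_sub_maxf f x :
  symmetrize f x - maxf x = symmetrize (fun y => f y - maxf y) x.
Proof.
rewrite /symmetrize sumrB mulrBr; congr (_ - _).
under eq_bigr => s _ do rewrite maxf_perm.
by rewrite sumr_const -[maxf x *+ _]mulr_natl mulrA mulVf ?mul1r.
Qed.

Lemma vertex_perm (s : 'S_d) S : (fun i => vertex R S (s i)) = vertex R (s @^-1: S).
Proof. by apply/funext => i; rewrite /vertex inE. Qed.

Lemma vertex_norm_symmetrize f : vertex_norm (symmetrize f) <= vertex_norm f.
Proof.
apply: bigmax_le => [|S _]; first exact: bigmax_ge_id.
rewrite /symmetrize normrM ger0_norm ?invr_ge0 // ler_pdivrMl ?lt0r ?card_Sd_neq0 ?ler0n //.
apply: le_trans (ler_norm_sum _ _ _) _; rewrite mulr_natl -sumr_const.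
by apply: ler_sum => s _; rewrite vertex_perm; apply: le_bigmax.
Qed.

Lemma inM_symmetrize Rs m : inM Rs m -> inM Rs (symmetrize m).
Proof.
case=> b0 [beta mE]; set c := (if _ then b0 else 0) in mE.
exists b0, (fun B : {set 'I_d} => #|'S_d|%:R^-1 * \sum_(s : 'S_d) beta (s^-1%g @: B)) => x.
rewrite /symmetrize; under eq_bigr => s _ do rewrite mE.
rewrite big_split /= sumr_const mulrDr -[c *+ _]mulr_natl mulrA mulVf // mul1r.
have reindex (s : 'S_d) : \sum_(A | admissible Rs A) beta A * smax (fun i => x (s i)) A =
    \sum_(B | admissible Rs B) beta (s^-1%g @: B) * smax x B.
  rewrite (reindex_inj (imset_inj (@perm_inj _ s^-1%g))) /=.
  apply: eq_big => [B|B _]; first by rewrite /admissible card_imset //; apply: perm_inj.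
  by rewrite smax_perm -imset_comp (eq_imset _ (permKV s)) imset_id.
under eq_bigr => s _ do rewrite reindex.
rewrite exchange_big mulr_sumr; congr (_ + _); apply: eq_bigr => B _.
by rewrite -mulr_suml mulrA.
Qed.

End Symmetrization.

Section CoefficientBounds.
Variables (R : realType) (d : nat) (c : R) (g : {set 'I_d} -> R).

Local Notation value S := (c + \sum_A g A * smax (vertex R S) A).

Hypothesis g_set0 : g set0 = 0.
Hypothesis value_bounded : forall S, `|value S| <= 2.

Let valueE S : value S = c + \sum_A g A * (A :&: S != set0)%:R.
Proof. by under eq_bigr => A _ do rewrite smax_vertex. Qed.

Lemma intercept_bound : `|c| <= 2.
Proof.
have := value_bounded set0; rewrite valueE.
by under eq_bigr => A _ do rewrite setI0 eqxx mulr0; rewrite big1 ?addr0.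
Qed.

Lemma sum_subset_coefE (T : {set 'I_d}) :
  \sum_(A : {set 'I_d} | A \subset T) g A = value [set: 'I_d] - value (~: T).
Proof.
rewrite !valueE opprD addrACA subrr add0r -sumrB big_mkcond /=.
apply: eq_bigr => A _; have [->|A_neq0] := eqVneq A set0.
  by rewrite g_set0 !mul0r subrr; case: ifP.
rewrite setIT A_neq0 -setDE setD_eq0 /=.
by case: (A \subset T); rewrite /= ?mulr0 ?mulr1 ?subr0 ?subrr.
Qed.

Definition coef_radius : R := 4 * (#|{set 'I_d}|%:R + 1) ^+ d.

Lemma coef_radius_ge2 : 2 <= coef_radius.
Proof. by rewrite /coef_radius -[2]mulr1 ler_pM // ?exprn_ege1 ?lerDr //; lra. Qed.

Lemma coef_bound T : `|g T| <= coef_radius.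
Proof.
pose M : R := #|{set 'I_d}|%:R.
have M_ge0 : 0 <= M by rewrite ler0n.
suff bound k : forall T : {set 'I_d}, (#|T| <= k)%N -> `|g T| <= 4 * (M + 1) ^+ k.
  by apply: bound; apply: leq_trans (max_card _) _; rewrite card_ord.
elim: k => [|k IH] {}T T_card.
  move: T_card; rewrite leqn0 cards_eq0 => /eqP ->.
  by rewrite g_set0 normr0 mulr_ge0 // exprn_ge0 // addr_ge0.
have subset_le : `|\sum_(A : {set 'I_d} | A \subset T) g A| <= 4.
  rewrite sum_subset_coefE; apply: le_trans (ler_normB _ _) _.
  by have := value_bounded [set: 'I_d]; have := value_bounded (~: T); lra.
have proper_le :
    `|\sum_(A : {set 'I_d} | (A \subset T) && (A != T)) g A| <= M * (4 * (M + 1) ^+ k).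
  apply: le_trans (ler_norm_sum _ _ _) _.
  apply: le_trans (_ : _ <= \sum_(A : {set 'I_d}) 4 * (M + 1) ^+ k) _.
    rewrite big_mkcond /=; apply: ler_sum => A _; case: ifP => [/andP [AT A_neqT]|_].
      apply: IH; rewrite -ltnS; apply: leq_trans T_card; apply: proper_card.
      by rewrite properEneq A_neqT.
    by rewrite mulr_ge0 // exprn_ge0 // addr_ge0.
  by rewrite sumr_const -[_ *+ _]mulr_natl.
set proper_sum := \sum_(A : {set 'I_d} | _) g A in proper_le.
rewrite (bigD1 T) //= -/proper_sum in subset_le.
have -> : g T = (g T + proper_sum) - proper_sum by rewrite addrK.
apply: le_trans (ler_normB _ _) _; apply: le_trans (lerD subset_le proper_le) _.
have pow_ge1 : 1 <= (M + 1) ^+ k by rewrite exprn_ege1 // lerDr.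
rewrite exprS; nra.
Qed.

End CoefficientBounds.

Lemma norm_maxf_vertex (R : realType) d (S : {set 'I_d}) : `|maxf (vertex R S)| <= 1.
Proof.
by rewrite /maxf smax_vertex setTI; case: (S != set0); rewrite ?normr1 ?normr0.
Qed.

Section Parametrization.
Variables (R : realType) (d : nat) (Rs : {set 'I_d}).
Local Notation N := #|{: option {set 'I_d}}|.
Implicit Types (p : 'rV[R]_N) (x : 'I_d -> R).

Definition coef p (o : option {set 'I_d}) : R := p ord0 (enum_rank o).

Definition model p x : R :=
  (if [exists r in Rs, val r == 0%N] then coef p None else 0)
  + \sum_(A | admissible Rs A) coef p (Some A) * smax x A.

Lemma inM_model p : inM Rs (model p).
Proof. by exists (coef p None), (fun A => coef p (Some A)). Qed.

Lemma model0 x : model 0 x = 0.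
Proof.
rewrite /model /coef mxE big1 ?addr0 => [|A _]; first by case: ifP.
by rewrite mxE mul0r.
Qed.

Lemma vertex_norm_model0 : vertex_norm (fun x => model 0 x - maxf x) <= 1.
Proof.
by apply: bigmax_le => // S _; rewrite model0 sub0r normrN norm_maxf_vertex.
Qed.

Lemma continuous_vertex_norm_model :
  continuous (fun p => vertex_norm (fun x => model p x - maxf x)).
Proof.
apply: continuous_big => [|S _ p]; first exact: max_continuous.
apply: (@continuous_comp _ _ _ (fun p => model p (vertex R S) - maxf (vertex R S)) Num.norm);
  last exact: norm_continuous.
apply: continuousB; last exact: cst_continuous.
apply: continuousD.
  by case: [exists r in Rs, val r == 0%N]; [exact: coord_continuous|exact: cst_continuous].
apply: continuous_big => [|A _ q]; first exact: add_continuous.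
by apply: continuousM; [exact: coord_continuous|exact: cst_continuous].
Qed.

Lemma inM_model_box m : inM Rs m -> vertex_norm (fun x => m x - maxf x) <= 1 ->
  exists2 p : 'rV[R]_N, (forall i, `|p ord0 i| <= coef_radius R d) & m = model p.
Proof.
case=> b0 [beta mE] m_near; set c := (if _ then b0 else 0) in mE.
pose g A := if admissible Rs A then beta A else 0.
pose p : 'rV[R]_N := \row_i (if enum_val i is Some A then g A else c).
have coefE o : coef p o = if o is Some A then g A else c.
  by rewrite /coef mxE enum_rankK.
have g_set0 : g set0 = 0 by rewrite /g /admissible cards0.
have value_bounded S : `|c + \sum_A g A * smax (vertex R S) A| <= 2.
  have -> : c + \sum_A g A * smax (vertex R S) A = m (vertex R S).
    rewrite mE [in RHS]big_mkcond; congr (_ + _); apply: eq_bigr => A _.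
    by rewrite /g; case: ifP; rewrite ?mul0r.
  rewrite -[m _](subrK (maxf (vertex R S))); apply: le_trans (ler_normD _ _) _.
  have := le_trans (le_bigmax _ _ S) m_near.
  by have := norm_maxf_vertex R S; lra.
exists p => [i|].
  rewrite mxE; case: (enum_val i) => [A|]; first exact: coef_bound.
  exact: le_trans (intercept_bound value_bounded) (coef_radius_ge2 R d).
apply/funext => x; rewrite mE /model !coefE; congr (_ + _); first by rewrite /c; case: ifP.
by apply: eq_bigr => A A_adm; rewrite coefE /g A_adm.
Qed.

End Parametrization.

Theorem lemma5 (R : realType) (d : nat) (Rs : {set 'I_d}) :
  (2 <= d)%N ->
  exists ms : ('I_d -> R) -> R,
    inMs Rs ms /\
    forall m : ('I_d -> R) -> R, inM Rs m ->
      supnorm (fun x => ms x - maxf x) <= supnorm (fun x => m x - maxf x).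
Proof.
move=> _.
pose B := coef_radius R d.
pose K := [set p : 'rV[R]_#|{: option {set 'I_d}}| |
  forall i, `[- B, B]%classic (p ord0 i)]%classic.
have K_p (p : 'rV[R]_#|{: option {set 'I_d}}|) : (forall i, `|p ord0 i| <= B) -> K p.
  by move=> p_le i; rewrite /= in_itv /= -ler_norml.
have K0 : K 0.
  by apply: K_p => i; rewrite mxE normr0 (le_trans _ (coef_radius_ge2 R d)).
have [p0 _ p0_min] := EVT_min_rV (ex_intro _ 0 K0)
  (rV_compact (fun=> @segment_compact R (- B) B))
  (continuous_subspaceT (@continuous_vertex_norm_model R d Rs)).
exists (symmetrize (model Rs p0)); split.
  by split=> [|s x]; [apply/inM_symmetrize/inM_model|apply: symmetrize_perm].
move=> m m_inM.
rewrite (supnorm_vertex_norm (inM_smax_affine m_inM)).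
rewrite (supnorm_vertex_norm (inM_smax_affine (inM_symmetrize (inM_model Rs p0)))).
under eq_fun => x do rewrite symmetrize_sub_maxf.
apply: le_trans (vertex_norm_symmetrize _) _.
(* Functions at vertex distance > 1 from MAX do worse than the zero model. *)
have [m_near|m_far] := leP (vertex_norm (fun x => m x - maxf x)) 1.
  by have [p p_box ->] := inM_model_box m_inM m_near; apply/p0_min/mem_set/K_p.
apply: le_trans (ltW m_far); apply: le_trans (vertex_norm_model0 R Rs).
exact/p0_min/mem_set/K0.
Qed.
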